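(* Let $\rho_b,\rho_f\in(0,1)$ and $\mu=\frac{(1-\rho_b)(1-\rho_f)}{1-\rho_b\rho_f}$. Let $(x_i)_{i\in\mathbb Z}$ be real numbers with $|x_i|<M$ for all $i$, for some constant $M<\infty$. Define $y_i(k)$ for all $i\in\mathbb Z$, $k\ge0$ by $y_i(0)=\mu x_i$; $y_i(1)=y_i(0)+\rho_b y_{i-1}(0)+\rho_f y_{i+1}(0)$; $y_i(2)=y_i(1)+\rho_b(y_{i-1}(1)-y_{i-1}(0))+\rho_f(y_{i+1}(1)-y_{i+1}(0))-2\rho_b\rho_f y_i(0)$; and for $k\ge2$, $y_i(k+1)=y_i(k)+\rho_b(y_{i-1}(k)-y_{i-1}(k-1))+\rho_f(y_{i+1}(k)-y_{i+1}(k-1))-\rho_b\rho_f(y_i(k-1)-y_i(k-2))$. Then for every $i$, $$\lim_{k\to\infty}y_i(k)=\frac{(1-\rho_b)(1-\rho_f)}{1-\rho_b\rho_f}\Big(x_i+\sum_{j=1}^\infty(\rho_b^j x_{i-j}+\rho_f^j x_{i+j})\Big).$$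
   Context: Sensors indexed by $i\in\mathbb Z$ on a line, each with a time-invariant measurement $x_i$ and consensus variable $y_i(k)$, $k=0,1,2,\dots$; communication only with immediate neighbors $i\pm1$. *)

From Stdlib Require Import Reals ZArith.
Open Scope R_scope.

(* The consensus iteration. [cstep rb rf mu x k] returns the triple
   (y(k), y(k-1), y(k-2)) of functions Z -> R (garbage in unused slots
   for k < 2). *)
Fixpoint ytriple (rb rf mu : R) (x : Z -> R) (k : nat)
  : (Z -> R) * (Z -> R) * (Z -> R) :=
  match k with
  | O => (fun i => mu * x i, fun _ => 0, fun _ => 0)
  | S k' =>
    let '(a, b, c) := ytriple rb rf mu x k' in
    match k' with
    | O => (fun i => a i + rb * a (i - 1)%Z + rf * a (i + 1)%Z, a, b)
    | S O => (fun i => a i + rb * (a (i - 1)%Z - b (i - 1)%Z)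
                        + rf * (a (i + 1)%Z - b (i + 1)%Z) - 2 * rb * rf * b i, a, b)
    | _ => (fun i => a i + rb * (a (i - 1)%Z - b (i - 1)%Z)
                     + rf * (a (i + 1)%Z - b (i + 1)%Z) - rb * rf * (b i - c i), a, b)
    end
  end.

Definition mu_of (rb rf : R) : R := (1 - rb) * (1 - rf) / (1 - rb * rf).

Definition y (rb rf : R) (x : Z -> R) (i : Z) (k : nat) : R :=
  let '(a, _, _) := ytriple rb rf (mu_of rb rf) x k in a i.

From Stdlib Require Import Reals ZArith Lra Lia.
From Coquelicot Require Import Coquelicot.
Open Scope R_scope.

(* Write [tail_term i n = rb^(n+1) x_(i-n-1) + rf^(n+1) x_(i+n+1)]
   for the (n+1)-st pair of terms of the series in the limit.  These terms obey,
   in the pair (i, n), the very same linear recursion as the consensus iteration: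
   tail_term i (n+2) = rb tail_term (i-1) (n+1) + rf tail_term (i+1) (n+1)
                       - rb rf tail_term i n.
   Hence the iteration is solved in closed form by partial sums of the series,
       y_i(k) = mu (x_i + tail_term i 0 + ... + tail_term i (k-1)),
   and this holds for an arbitrary initial scaling mu.  The theorem then reduces
   to convergence of the series, which is dominated by two geometric series
   because x is bounded. *)

Fixpoint psum (t : nat -> R) (k : nat) : R :=
  match k with O => 0 | S k' => psum t k' + t k' end.

Lemma psum_succ (t : nat -> R) (k : nat) : psum t (S k) = sum_f_R0 t k.
Proof. induction k as [|k IH]; simpl in *; [ring | rewrite <- IH; reflexivity]. Qed.

Lemma psum_cv (t : nat -> R) (s : R) : infinite_sum t s -> Un_cv (psum t) s.
Proof.
  intros Hs. apply (CV_shift _ 1).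
  apply (Un_cv_ext (sum_f_R0 t)); [|exact Hs].
  intros k. rewrite Nat.add_1_r, psum_succ. reflexivity.
Qed.

Definition tail_term (rb rf : R) (x : Z -> R) (i : Z) (n : nat) : R :=
  rb ^ (S n) * x (i - Z.of_nat (S n))%Z + rf ^ (S n) * x (i + Z.of_nat (S n))%Z.

Lemma tail_term_0 (rb rf : R) (x : Z -> R) (i : Z) :
  tail_term rb rf x i 0 = rb * x (i - 1)%Z + rf * x (i + 1)%Z.
Proof. unfold tail_term. simpl. ring. Qed.

(* Second term: matches the special second step of the iteration, whose
   correction [- 2 rb rf x_i] compensates the two paths back to node i. *)
Lemma tail_term_1 (rb rf : R) (x : Z -> R) (i : Z) :
  tail_term rb rf x i 1 =
  rb * tail_term rb rf x (i - 1)%Z 0 + rf * tail_term rb rf x (i + 1)%Z 0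
  - 2 * rb * rf * x i.
Proof.
  unfold tail_term.
  replace (i - Z.of_nat 2)%Z with (i - 1 - Z.of_nat 1)%Z by lia.
  replace (i + Z.of_nat 2)%Z with (i + 1 + Z.of_nat 1)%Z by lia.
  replace (i - 1 + Z.of_nat 1)%Z with i by lia.
  replace (i + 1 - Z.of_nat 1)%Z with i by lia.
  simpl pow. ring.
Qed.

Lemma tail_term_rec (rb rf : R) (x : Z -> R) (i : Z) (n : nat) :
  tail_term rb rf x i (S (S n)) =
  rb * tail_term rb rf x (i - 1)%Z (S n) + rf * tail_term rb rf x (i + 1)%Z (S n)
  - rb * rf * tail_term rb rf x i n.
Proof.
  unfold tail_term.
  replace (i - Z.of_nat (S (S (S n))))%Z with (i - 1 - Z.of_nat (S (S n)))%Z by lia.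
  replace (i + Z.of_nat (S (S (S n))))%Z with (i + 1 + Z.of_nat (S (S n)))%Z by lia.
  replace (i - 1 + Z.of_nat (S (S n)))%Z with (i + Z.of_nat (S n))%Z by lia.
  replace (i + 1 - Z.of_nat (S (S n)))%Z with (i - Z.of_nat (S n))%Z by lia.
  simpl pow. ring.
Qed.

Definition closed_form (rb rf mu : R) (x : Z -> R) (k : nat) (i : Z) : R :=
  mu * (x i + psum (tail_term rb rf x i) k).

Lemma ytriple_succ3 (rb rf mu : R) (x : Z -> R) (m : nat) :
  ytriple rb rf mu x (S (S (S m))) =
  let '(a, b, c) := ytriple rb rf mu x (S (S m)) in
  (fun i => a i + rb * (a (i - 1)%Z - b (i - 1)%Z)
            + rf * (a (i + 1)%Z - b (i + 1)%Z) - rb * rf * (b i - c i), a, b).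
Proof. reflexivity. Qed.

Lemma ytriple_closed_form (rb rf mu : R) (x : Z -> R) (m : nat) :
  let '(a, b, c) := ytriple rb rf mu x (S (S m)) in
  forall i, a i = closed_form rb rf mu x (S (S m)) i /\
            b i = closed_form rb rf mu x (S m) i /\
            c i = closed_form rb rf mu x m i.
Proof.
  unfold closed_form. induction m as [|m IH].
  - intros i. simpl psum. rewrite tail_term_1, !tail_term_0.
    simpl. repeat split; ring.
  - rewrite ytriple_succ3. destruct (ytriple rb rf mu x (S (S m))) as [[a b] c].
    intros i.
    destruct (IH i) as [Ha [Hb Hc]].
    destruct (IH (i - 1)%Z) as [Ha1 [Hb1 _]].
    destruct (IH (i + 1)%Z) as [Ha2 [Hb2 _]].
    repeat split; auto.
    rewrite Ha, Hb, Hc, Ha1, Hb1, Ha2, Hb2. cbn [psum].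
    rewrite tail_term_rec. ring.
Qed.

Lemma y_closed_form (rb rf : R) (x : Z -> R) (i : Z) (k : nat) :
  y rb rf x i k = closed_form rb rf (mu_of rb rf) x k i.
Proof.
  unfold y, closed_form. destruct k as [|[|k]].
  - simpl. ring.
  - simpl psum. rewrite tail_term_0. simpl. ring.
  - pose proof (ytriple_closed_form rb rf (mu_of rb rf) x k) as H.
    destruct (ytriple rb rf (mu_of rb rf) x (S (S k))) as [[a b] c].
    apply H.
Qed.

Lemma ex_series_geom_weighted (r M : R) (u : nat -> R) :
  0 <= r < 1 -> (forall n, Rabs (u n) <= M) ->
  ex_series (fun n => r ^ (S n) * u n).
Proof.
  intros Hr HM.
  apply (@ex_series_le R_AbsRing R_CompleteNormedModule _
           (fun n => scal (M * r) (r ^ n))).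
  - intros n. change norm with Rabs. change scal with Rmult. simpl.
    assert (Hpow : 0 <= r * r ^ n) by (apply (pow_le r (S n)); lra).
    rewrite Rabs_mult, Rabs_pos_eq by exact Hpow.
    specialize (HM n). nra.
  - apply (@ex_series_scal R_AbsRing R_NormedModule).
    apply ex_series_geom. rewrite Rabs_pos_eq; lra.
Qed.

Lemma tail_term_summable (rb rf M : R) (x : Z -> R) (i : Z) :
  0 <= rb < 1 -> 0 <= rf < 1 -> (forall j, Rabs (x j) <= M) ->
  ex_series (tail_term rb rf x i).
Proof.
  intros Hb Hf HM.
  apply (@ex_series_plus R_AbsRing R_NormedModule
           (fun n => rb ^ (S n) * x (i - Z.of_nat (S n))%Z)
           (fun n => rf ^ (S n) * x (i + Z.of_nat (S n))%Z));
    eapply ex_series_geom_weighted; eauto.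
Qed.

Theorem mainTheorem2 (rb rf M : R) (x : Z -> R) :
  0 < rb < 1 -> 0 < rf < 1 ->
  (forall i : Z, Rabs (x i) < M) ->
  forall i : Z,
  exists s : R,
    infinite_sum
      (fun n : nat => rb ^ (S n) * x (i - Z.of_nat (S n))%Z
                      + rf ^ (S n) * x (i + Z.of_nat (S n))%Z) s /\
    Un_cv (fun k : nat => y rb rf x i k)
      ((1 - rb) * (1 - rf) / (1 - rb * rf) * (x i + s)).
Proof.
  intros Hb Hf HM i.
  assert (HM' : forall j, Rabs (x j) <= M) by (intros j; apply Rlt_le, HM).
  destruct (tail_term_summable rb rf M x i ltac:(lra) ltac:(lra) HM') as [s Hs].
  apply is_series_Reals in Hs.
  exists s. split; [exact Hs |].
  apply (Un_cv_ext (fun k => closed_form rb rf (mu_of rb rf) x k i)).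
  { intros k. symmetry. apply y_closed_form. }
  apply is_lim_seq_Reals. unfold closed_form.
  apply (is_lim_seq_scal_l _ (mu_of rb rf) (x i + s)).
  apply is_lim_seq_plus'; [apply is_lim_seq_const |].
  apply is_lim_seq_Reals, psum_cv, Hs.
Qed.
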